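(* Let $(V,\|\cdot\|)$ be a rectilinear normed plane, i.e. one whose unit circle is a parallelogram. Then $c_B(\|\cdot\|)=\frac12$.
   Context: A normed (Minkowski) plane $(V,\|\cdot\|)$ is a two-dimensional real vector space with a norm; $o$ is the origin, $B=\{v:\|v\|\le1\}$ the unit ball, $S=\{v:\|v\|=1\}$ the unit circle. For distinct $x,y$, $\mathrm{bis}(x,y)=\{z\in V:\|z-x\|=\|z-y\|\}$. For $x\in S$, the inner projection is $\mathrm{P_I}(x)=\{z/\|z\|: z\in(\mathrm{bis}(-x,x)\cap B)\setminus\{o\}\}$. The sine function is $s:S\times S\to\mathbb{R}$, $s(u,v)=\inf_{t\in\mathbb{R}}\|u+tv\|$. The constant $c_B$ is $c_B(\|\cdot\|)=\inf_{x\in S}\ \inf_{w\in\mathrm{P_I}(x)} s(w,x)$. *)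

From Stdlib Require Import Reals Lra.
Open Scope R_scope.

(* The plane V is modelled as R^2 = R * R (every 2-dim real vector space is
   linearly isomorphic to it). *)
Definition vec := (R * R)%type.
Definition vadd (x y : vec) : vec := (fst x + fst y, snd x + snd y).
Definition vscal (k : R) (x : vec) : vec := (k * fst x, k * snd x).
Definition vopp (x : vec) : vec := vscal (-1) x.
Definition vsub (x y : vec) : vec := vadd x (vopp y).
Definition vzero : vec := (0, 0).

Definition is_norm (N : vec -> R) : Prop :=
  (forall x, N x = 0 -> x = vzero) /\
  (forall k x, N (vscal k x) = Rabs k * N x) /\
  (forall x y, N (vadd x y) <= N x + N y).

Definition is_glb (E : R -> Prop) (m : R) : Prop :=
  (forall y, E y -> m <= y) /\
  (forall m', (forall y, E y -> m' <= y) -> m' <= m).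

Definition bis (N : vec -> R) (x y z : vec) : Prop := N (vsub z x) = N (vsub z y).

Definition inner_proj (N : vec -> R) (x w : vec) : Prop :=
  exists z, bis N (vopp x) x z /\ N z <= 1 /\ z <> vzero /\ w = vscal (/ N z) z.

Definition sine_is (N : vec -> R) (u v : vec) (r : R) : Prop :=
  is_glb (fun y => exists t : R, y = N (vadd u (vscal t v))) r.

(* c = c_B(N) = inf_{x in S} inf_{w in P_I(x)} s(w,x)
   (the iterated infimum equals the infimum of the union of the value sets) *)
Definition cB_is (N : vec -> R) (c : R) : Prop :=
  is_glb (fun r => exists x w, N x = 1 /\ inner_proj N x w /\ sine_is N w x r) c.

(* Rectilinear: the unit circle is a parallelogram, i.e. (being centrally
   symmetric, it is centred at o) there are linearly independent u, v such that
   S = { a u + b v : |a| + |b| = 1 } (the parallelogram with vertices +-u, +-v). *)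
Definition rectilinear (N : vec -> R) : Prop :=
  exists u v : vec,
    fst u * snd v - snd u * fst v <> 0 /\
    forall x, N x = 1 <->
      exists a b, x = vadd (vscal a u) (vscal b v) /\ Rabs a + Rabs b = 1.

(** For every norm, c_B >= 1/2: if z lies on the bisector of -x and x with
    N z <= 1, then N(z + x) = N(z - x) >= 1, and the function t |-> N(z + t x)
    is 1-Lipschitz, at least N z - |t| and at least |t| - N z, so it never drops
    below N z / 2; normalising z gives the bound 1/2 on s(w, x).

    For the parallelogram norm N(a u + b v) = |a| + |b| the bound is sharp:
    for x = p u + (1 - p) v with 1/2 < p < 1, the point z = (1 - p)(u - v) is
    on the bisector of -x and x, w = (u - v)/2, and s(w, x) = 1/(2p), which
    tends to 1/2 as p tends to 1. *)

From Stdlib Require Import Reals Lra.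
Open Scope R_scope.

Ltac vec_eq :=
  unfold vsub, vopp, vadd, vscal, vzero; apply injective_projections; simpl.

Lemma is_glb_of_min (E : R -> Prop) (m : R) :
  (forall y, E y -> m <= y) -> E m -> is_glb E m.
Proof. intros Hlb Hm; split; auto. Qed.

Lemma le_half_of_le_inv_double (m : R) :
  (forall p, 1/2 < p < 1 -> m <= / (2 * p)) -> m <= 1/2.
Proof.
  intros Hm. destruct (Rle_dec m (1/2)) as [Hle|Hgt]; auto. exfalso.
  set (k := / (2 * m)).
  assert (Hk : k * (2 * m) = 1) by (unfold k; field; lra).
  assert (Hk1 : k < 1) by nra.
  assert (Hk0 : 0 < k) by (unfold k; apply Rinv_0_lt_compat; lra).
  pose proof (Hm ((1 + k) / 2) ltac:(lra)) as H.
  apply (Rmult_le_compat_r (1 + k)) in H; [|lra].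
  replace (/ (2 * ((1 + k) / 2)) * (1 + k)) with 1 in H by (field; lra).
  nra.
Qed.

Section NormFacts.

Variable N : vec -> R.
Hypothesis HN : is_norm N.

Lemma norm_eq0 x : N x = 0 -> x = vzero.
Proof. apply HN. Qed.

Lemma normZ k x : N (vscal k x) = Rabs k * N x.
Proof. apply HN. Qed.

Lemma norm_triangle_of a b c : c = vadd a b -> N c <= N a + N b.
Proof. intros ->; apply HN. Qed.

Lemma norm_vzero : N vzero = 0.
Proof.
  replace vzero with (vscal 0 vzero) by (vec_eq; ring).
  rewrite normZ, Rabs_R0; ring.
Qed.

Lemma norm_opp x : N (vscal (-1) x) = N x.
Proof.
  rewrite normZ, Rabs_left by lra; ring.
Qed.

Lemma norm_ge0 x : 0 <= N x.
Proof.
  pose proof (norm_triangle_of x (vscal (-1) x) vzero ltac:(vec_eq; ring)) as H.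
  rewrite norm_vzero, norm_opp in H; lra.
Qed.

Lemma norm_gt0 x : x <> vzero -> 0 < N x.
Proof.
  intros Hx; destruct (norm_ge0 x) as [H|H]; auto.
  exfalso; apply Hx, norm_eq0; auto.
Qed.

Lemma norm_line_lipschitz x z s t :
  N (vadd z (vscal t x)) <= N (vadd z (vscal s x)) + Rabs (t - s) * N x.
Proof.
  rewrite <- normZ; apply norm_triangle_of; vec_eq; ring.
Qed.

Lemma norm_line_ge_scal x z t :
  Rabs t * N x <= N (vadd z (vscal t x)) + N z.
Proof.
  rewrite <- normZ.
  pose proof (norm_triangle_of (vadd z (vscal t x)) (vscal (-1) z) (vscal t x)
    ltac:(vec_eq; ring)) as H.
  rewrite norm_opp in H; lra.
Qed.

Lemma norm_bisector_ge1 x z :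
  N x = 1 -> N (vadd z x) = N (vsub z x) -> 1 <= N (vadd z x).
Proof.
  intros Hx Hd.
  pose proof (norm_triangle_of (vadd z x) (vscal (-1) (vsub z x)) (vscal 2 x)
    ltac:(vec_eq; ring)) as H.
  rewrite norm_opp, normZ, Rabs_pos_eq in H by lra; lra.
Qed.

Lemma bisector_line_ge_half_norm x z t :
  N x = 1 -> N z <= 1 -> N (vadd z x) = N (vsub z x) ->
  N z / 2 <= N (vadd z (vscal t x)).
Proof.
  intros Hx Hz Hd.
  pose proof (norm_bisector_ge1 x z Hx Hd) as Hd1.
  pose proof (norm_line_lipschitz x z t 1) as Hp1.
  pose proof (norm_line_lipschitz x z t (-1)) as Hm1.
  pose proof (norm_line_lipschitz x z t 0) as H0.
  pose proof (norm_line_ge_scal x z t) as Hgt.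
  replace (vadd z (vscal 1 x)) with (vadd z x) in Hp1 by (vec_eq; ring).
  replace (vadd z (vscal (-1) x)) with (vsub z x) in Hm1 by (vec_eq; ring).
  replace (vadd z (vscal 0 x)) with z in H0 by (vec_eq; ring).
  rewrite Hx in *.
  unfold Rabs in *; repeat destruct Rcase_abs; lra.
Qed.

Lemma inner_proj_line_ge_half x w s :
  N x = 1 -> inner_proj N x w -> 1/2 <= N (vadd w (vscal s x)).
Proof.
  intros Hx [z [Hb [Hz [Hz0 ->]]]].
  assert (Hd : N (vadd z x) = N (vsub z x)).
  { rewrite <- Hb; f_equal; vec_eq; ring. }
  pose proof (norm_gt0 z Hz0) as Hpos.
  pose proof (bisector_line_ge_half_norm x z (s * N z) Hx Hz Hd) as H.
  replace (vadd (vscal (/ N z) z) (vscal s x))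
    with (vscal (/ N z) (vadd z (vscal (s * N z) x))) by (vec_eq; field; lra).
  rewrite normZ, Rabs_pos_eq by (left; apply Rinv_0_lt_compat; lra).
  apply (Rmult_le_reg_l (N z)); [lra|].
  rewrite <- Rmult_assoc, Rinv_r by lra; lra.
Qed.

Lemma sine_inner_proj_ge_half x w r :
  N x = 1 -> inner_proj N x w -> sine_is N w x r -> 1/2 <= r.
Proof.
  intros Hx Hw [_ Hglb]; apply Hglb.
  intros y [t ->]; exact (inner_proj_line_ge_half x w t Hx Hw).
Qed.

End NormFacts.

Section Parallelogram.

Variable N : vec -> R.
Hypothesis HN : is_norm N.
Variables u v : vec.
Hypothesis Hcircle : forall x, N x = 1 <->
  exists a b, x = vadd (vscal a u) (vscal b v) /\ Rabs a + Rabs b = 1.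

Lemma parallelogram_norm a b :
  N (vadd (vscal a u) (vscal b v)) = Rabs a + Rabs b.
Proof.
  set (s := Rabs a + Rabs b).
  pose proof (Rabs_pos a); pose proof (Rabs_pos b).
  destruct (Req_dec s 0) as [Hs0|Hs0].
  - assert (Ha : a = 0).
    { destruct (Req_dec a 0) as [|Ha]; auto.
      apply Rabs_pos_lt in Ha; unfold s in Hs0; lra. }
    assert (Hb : b = 0).
    { destruct (Req_dec b 0) as [|Hb]; auto.
      apply Rabs_pos_lt in Hb; unfold s in Hs0; lra. }
    subst a b; rewrite Hs0.
    replace (vadd (vscal 0 u) (vscal 0 v)) with vzero by (vec_eq; ring).
    apply norm_vzero, HN.
  - assert (Hs : 0 < s) by (unfold s in *; lra).
    assert (Hunit : N (vadd (vscal (a / s) u) (vscal (b / s) v)) = 1).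
    { apply Hcircle. exists (a / s), (b / s); split; [reflexivity|].
      unfold Rdiv; rewrite !Rabs_mult, (Rabs_pos_eq (/ s))
        by (left; apply Rinv_0_lt_compat; lra).
      rewrite <- Rmult_plus_distr_r; apply Rinv_r; lra. }
    replace (vadd (vscal (a / s) u) (vscal (b / s) v))
      with (vscal (/ s) (vadd (vscal a u) (vscal b v))) in Hunit
      by (vec_eq; unfold Rdiv; ring).
    rewrite (normZ N HN), Rabs_pos_eq in Hunit
      by (left; apply Rinv_0_lt_compat; lra).
    apply (Rmult_eq_reg_l (/ s)); [|apply Rinv_neq_0_compat; lra].
    rewrite Hunit; field; lra.
Qed.

Variable p : R.
Hypothesis Hp : 1/2 < p < 1.

Let q := 1 - p.
Let x := vadd (vscal p u) (vscal q v).
Let w := vadd (vscal (1/2) u) (vscal (-1/2) v).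

Lemma parallelogram_witness_unit : N x = 1.
Proof.
  unfold x; rewrite parallelogram_norm, !Rabs_pos_eq; unfold q; lra.
Qed.

Lemma parallelogram_witness_inner_proj : inner_proj N x w.
Proof.
  set (z := vadd (vscal q u) (vscal (- q) v)).
  assert (Nz : N z = 2 * q).
  { unfold z; rewrite parallelogram_norm, Rabs_Ropp, Rabs_pos_eq; unfold q; lra. }
  exists z; repeat split.
  - unfold bis.
    replace (vsub z (vopp x)) with (vadd (vscal 1 u) (vscal 0 v))
      by (unfold z, x, q; vec_eq; ring).
    replace (vsub z x) with (vadd (vscal (q - p) u) (vscal (- 2 * q) v))
      by (unfold z, x; vec_eq; ring).
    rewrite !parallelogram_norm, Rabs_R1, Rabs_R0, Rabs_left, Rabs_left;
      unfold q; lra.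
  - rewrite Nz; unfold q; lra.
  - intros Hz0. rewrite Hz0, (norm_vzero N HN) in Nz; unfold q in Nz; lra.
  - rewrite Nz; unfold w, z, q; vec_eq; field; lra.
Qed.

Lemma parallelogram_witness_sine : sine_is N w x (/ (2 * p)).
Proof.
  apply is_glb_of_min.
  - intros y [t ->].
    set (A := 1/2 + t * p). set (B := -1/2 + t * q).
    replace (vadd w (vscal t x)) with (vadd (vscal A u) (vscal B v))
      by (unfold w, x, A, B; vec_eq; ring).
    rewrite parallelogram_norm.
    assert (Hcomb : 1/2 <= q * Rabs A + p * Rabs B).
    (* The combination q A - p B does not depend on t. *)
    { assert (Hid : q * A + p * - B = 1/2) by (unfold A, B, q; field).
      pose proof (Rabs_triang (q * A) (p * - B)) as Ht.
      rewrite Hid, !Rabs_mult, Rabs_Ropp, (Rabs_pos_eq (1/2)), (Rabs_pos_eq q),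
        (Rabs_pos_eq p) in Ht by (unfold q; lra).
      exact Ht. }
    assert (Hqp : q * Rabs A <= p * Rabs A)
      by (apply Rmult_le_compat_r; [apply Rabs_pos|unfold q; lra]).
    apply (Rmult_le_reg_l (2 * p)); [lra|].
    rewrite Rinv_r by lra; lra.
  - exists (- / (2 * p)).
    replace (vadd w (vscal (- / (2 * p)) x)) with (vadd (vscal 0 u) (vscal (- / (2 * p)) v))
      by (unfold w, x, q; vec_eq; field; lra).
    rewrite parallelogram_norm, Rabs_R0, Rabs_Ropp, Rabs_pos_eq;
      [ring | left; apply Rinv_0_lt_compat; lra].
Qed.

End Parallelogram.

Theorem mainTheorem14 (N : vec -> R) (HN : is_norm N) (Hrect : rectilinear N) :
  cB_is N (1/2).
Proof.
  split.
  - intros r [x [w [Hx [Hw Hs]]]].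
    exact (sine_inner_proj_ge_half N HN x w r Hx Hw Hs).
  -
    intros m Hm. destruct Hrect as [u [v [_ Hcircle]]].
    apply le_half_of_le_inv_double; intros p Hp.
    apply Hm.
    exists (vadd (vscal p u) (vscal (1 - p) v)),
           (vadd (vscal (1/2) u) (vscal (-1/2) v)).
    split; [|split].
    + exact (parallelogram_witness_unit N HN u v Hcircle p Hp).
    + exact (parallelogram_witness_inner_proj N HN u v Hcircle p Hp).
    + exact (parallelogram_witness_sine N HN u v Hcircle p Hp).
Qed.
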